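(* Let $q$ be an odd prime power with $q\equiv 1 \pmod 3$ and $q>261$, and let $n=\frac{q+2}{3}$. Then not every element of $\mathbb{F}_q$ is the sum of a $4$-potent and an $n$-potent of $\mathbb{F}_q$; that is, there exists $\gamma\in\mathbb{F}_q$ that cannot be written as $\alpha+\beta$ with $\alpha^n=\alpha$ and $\beta^4=\beta$.
   Context: $\mathbb{F}_q$ denotes the finite field with $q$ elements. For an integer $m>1$, an element $a\in\mathbb{F}_q$ is called an $m$-potent if $a^m=a$. *)

From mathcomp Require Import all_boot all_algebra all_field.
Set Implicit Arguments. Unset Strict Implicit. Unset Printing Implicit Defensive.
Import GRing.Theory.
Local Open Scope ring_scope.

Definition mpotent (R : pzRingType) (m : nat) (a : R) : Prop := a ^+ m = a.

From mathcomp Require Import all_boot all_algebra all_field.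
From mathcomp Require Import zify ring.
From Stdlib Require Import Classical.

(* Write q = 3e + 1.  The (e+1)-potents of F are 0 and the roots of x^e = 1, the
   4-potents are 0, 1, w, w^2 with w a primitive cube root of unity.  If every element
   were such a sum, the polynomial
     P(x) = (x^4 - x) (x^e - 1) prod_(z^3 = 1) ((x - z)^e - 1)
   would vanish on F, and so would all its moments sum_x x^a P(x).  These are computed
   from sum_x x^k = -1 if q - 1 divides k > 0, and 0 otherwise: expanding the product
   leaves binomial and trinomial moments, most of which vanish for small a, while the
   substitution x -> 1/x identifies the remaining ones in pairs.  For 3 !| e the moment
   of x^(2e-7) P(x) equals C(e+1, 2); for 3 | e, where P(x) / (x^4 - x) already vanishes
   on F, a combination of four of its moments equals 18 C(e+1, 3).  Both are nonzero in
   F since 3e = -1 there and the characteristic is odd. *)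

Set Implicit Arguments.
Unset Strict Implicit.
Unset Printing Implicit Defensive.
Import GRing.Theory.
Local Open Scope ring_scope.

Section PowerSums.

Variable F : finFieldType.
Local Notation q := #|F|.

Lemma natr_card_finField : q%:R = 0 :> F.
Proof.
have : \sum_(x : F) x = \sum_(x : F) (x + 1) := reindex_inj (addIr 1).
rewrite big_split /= sumr_const => /eqP.
by rewrite -subr_eq0 opprD addrA subrr sub0r oppr_eq0 => /eqP.
Qed.

Lemma pred_card_gt0 : (0 < q.-1)%N.
Proof. by case: q (finNzRing_gt1 F) => [|[|n]]. Qed.

Lemma natr_pred_card_finField : q.-1%:R = -1 :> F.
Proof.
by apply/eqP; rewrite -addr_eq0 natr1 prednK ?natr_card_finField // ltnW ?finNzRing_gt1.
Qed.

Lemma expf_pred_card (x : F) : x != 0 -> x ^+ q.-1 = 1.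
Proof.
move=> x_neq0; apply: (mulfI x_neq0).
by rewrite mulr1 -exprS prednK ?expf_card // ltnW ?finNzRing_gt1.
Qed.

Lemma expf_modn_pred_card (x : F) k : x != 0 -> x ^+ k = x ^+ (k %% q.-1).
Proof.
move=> x_neq0; rewrite {1}(divn_eq k q.-1) exprD mulnC exprM.
by rewrite expf_pred_card // expr1n mul1r.
Qed.

(* A polynomial of degree k < q - 1 cannot vanish on all q - 1 units. *)
Lemma exists_expf_neq1 k : (0 < k < q.-1)%N -> exists2 y : F, y != 0 & y ^+ k != 1.
Proof.
case/andP=> k_gt0 k_lt.
have [/existsP[y /andP[]]|/existsPn all_roots] := boolP [exists y : F, (y != 0) && (y ^+ k != 1)].
  by exists y.
exfalso.
pose units := [seq x <- enum F | x != 0].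
have : (size units < size ('X^k - 1 : {poly F})%R)%N.
  apply: max_poly_roots; first by rewrite -size_poly_eq0 size_Xn_sub_1.
    apply/allP=> x; rewrite mem_filter => /andP[x_neq0 _].
    have := all_roots x; rewrite x_neq0 negbK => /eqP xk.
    by rewrite rootE !hornerE xk subrr.
  by rewrite filter_uniq // enum_uniq.
have -> : size units = q.-1.
  rewrite size_filter -(cardC1 (0 : F)) cardE /enum_mem size_filter.
  by rewrite (@eq_filter _ _ predT) // filter_predT; apply: eq_count => x; rewrite !inE.
by rewrite size_Xn_sub_1 // ltnS leqNgt k_lt.
Qed.

Lemma exists_cube_root : (3 %| q.-1)%N -> exists w : F, w ^+ 2 + w + 1 = 0.
Proof.
move=> dvd3_q1; set k := (q.-1 %/ 3)%N.
have q1_eq : q.-1 = (3 * k)%N by rewrite /k; lia.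
have [|y y_neq0 yk_neq1] := @exists_expf_neq1 k; first by have := pred_card_gt0; lia.
exists (y ^+ k); set w := y ^+ k.
have /eqP : w ^+ 3 = 1 by rewrite -exprM mulnC -q1_eq expf_pred_card.
rewrite -subr_eq0 (_ : w ^+ 3 - 1 = (w - 1) * (w ^+ 2 + w + 1)); last by ring.
by rewrite mulf_eq0 subr_eq0 (negbTE yk_neq1) => /eqP.
Qed.

Definition power_sum (k : nat) : F := \sum_(x : F) x ^+ k.

Lemma power_sum_ndvd k : ~~ (q.-1 %| k)%N -> power_sum k = 0.
Proof.
move=> k_ndvd; have [|y y_neq0 yk_neq1] := @exists_expf_neq1 (k %% q.-1).
  by rewrite lt0n k_ndvd ltn_pmod ?pred_card_gt0.
have : power_sum k = y ^+ k * power_sum k.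
  rewrite /power_sum mulr_sumr (reindex_inj (mulfI y_neq0)) /=.
  by apply: eq_bigr => x _; rewrite exprMn.
move/eqP; rewrite -subr_eq0 -{1}[power_sum k]mul1r -mulrBl mulf_eq0 subr_eq0.
by rewrite eq_sym (expf_modn_pred_card k y_neq0) (negbTE yk_neq1) => /eqP.
Qed.

Lemma power_sum0 : power_sum 0 = 0.
Proof. by rewrite /power_sum (eq_bigr (fun=> 1)) ?sumr_const ?card_ord ?natr_card_finField. Qed.

Lemma power_sum_pred_card : power_sum q.-1 = -1.
Proof.
rewrite /power_sum (bigD1 0) //= expr0n (gtn_eqF pred_card_gt0) add0r.
rewrite (eq_bigr (fun=> 1)) => [|x x_neq0]; last exact: expf_pred_card.
rewrite sumr_const -natr_pred_card_finField -(cardC1 (0 : F)).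
by congr _%:R; apply: eq_card => x; rewrite !inE.
Qed.

Lemma power_sum_small k : (k < 2 * q.-1)%N -> power_sum k = - (k == q.-1)%:R.
Proof.
move=> k_lt; have [->|k_neq] := eqVneq k q.-1; first by rewrite power_sum_pred_card.
have [->|k_gt0] := posnP k; first by rewrite power_sum0 oppr0.
rewrite oppr0; apply: power_sum_ndvd; apply/negP => /dvdnP[m k_eq].
move: k_lt k_neq k_gt0; rewrite {k}k_eq.
by case: m => [|[|m]]; rewrite ?mul0n ?mul1n ?eqxx //; nia.
Qed.

Lemma sum_power_sum_single n (u : nat -> F) (k : nat -> nat) i0 :
    (i0 < n)%N -> k i0 = q.-1 ->
    (forall i, (i < n)%N -> (k i < 2 * q.-1)%N /\ (k i = q.-1 -> i = i0)) ->
  \sum_(i < n) u i * power_sum (k i) = - u i0.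
Proof.
move=> i0_lt k_i0 k_small; rewrite (bigD1 (Ordinal i0_lt)) //= k_i0 power_sum_pred_card.
rewrite big1 ?addr0 ?mulrN1 // => i i_neq; have [k_lt k_inj] := k_small i (ltn_ord i).
rewrite power_sum_small // (_ : k i == q.-1 = false) ?oppr0 ?mulr0 //.
by apply/eqP => /k_inj i_eq; rewrite -val_eqE /= i_eq eqxx in i_neq.
Qed.

Lemma sum_power_sum_none n (u : nat -> F) (k : nat -> nat) :
    (forall i, (i < n)%N -> (k i < 2 * q.-1)%N /\ k i <> q.-1) ->
  \sum_(i < n) u i * power_sum (k i) = 0.
Proof.
move=> k_small; rewrite big1 // => i _; have [k_lt k_neq] := k_small i (ltn_ord i).
by rewrite power_sum_small // (_ : k i == q.-1 = false) ?oppr0 ?mulr0 //; apply/eqP.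
Qed.

Lemma sum_expr_binomial a b n (c : F) :
  \sum_(x : F) x ^+ a * (x ^+ b + c) ^+ n =
  \sum_(i < n.+1) c ^+ i *+ 'C(n, i) * power_sum (a + b * (n - i)).
Proof.
under eq_bigr => x _ do rewrite exprDn mulr_sumr.
rewrite exchange_big /=; apply: eq_bigr => i _; rewrite /power_sum mulr_sumr.
apply: eq_bigr => x _; rewrite exprD exprM mulrnAr mulrnAl; congr (_ *+ _).
ring.
Qed.

Lemma sum_expr_horner a (p : {poly F}) :
  \sum_(x : F) x ^+ a * p.[x] = \sum_(j < size p) p`_j * power_sum (a + j).
Proof.
under eq_bigr => x _ do rewrite horner_coef mulr_sumr.
rewrite exchange_big /=; apply: eq_bigr => j _; rewrite /power_sum mulr_sumr.
by apply: eq_bigr => x _; rewrite exprD mulrCA.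
Qed.

Lemma sum_expr_binomial_single a b n (c : F) i0 :
    (i0 <= n)%N -> (a + b * (n - i0))%N = q.-1 ->
    (forall i, (i <= n)%N ->
       (a + b * (n - i) < 2 * q.-1)%N /\ ((a + b * (n - i))%N = q.-1 -> i = i0)) ->
  \sum_(x : F) x ^+ a * (x ^+ b + c) ^+ n = - (c ^+ i0 *+ 'C(n, i0)).
Proof.
move=> i0_le k_i0 k_small; rewrite sum_expr_binomial.
exact: (@sum_power_sum_single _ (fun i => c ^+ i *+ 'C(n, i)) (fun i => a + b * (n - i))%N).
Qed.

Lemma sum_expr_binomial_none a b n (c : F) :
    (forall i, (i <= n)%N -> (a + b * (n - i) < 2 * q.-1)%N /\ (a + b * (n - i))%N <> q.-1) ->
  \sum_(x : F) x ^+ a * (x ^+ b + c) ^+ n = 0.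
Proof.
move=> k_small; rewrite sum_expr_binomial.
exact: (@sum_power_sum_none _ (fun i => c ^+ i *+ 'C(n, i)) (fun i => a + b * (n - i))%N).
Qed.

Lemma sum_expr_horner_single a (p : {poly F}) j0 :
    (j0 < size p)%N -> (a + j0)%N = q.-1 ->
    (forall j, (j < size p)%N -> (a + j < 2 * q.-1)%N /\ ((a + j)%N = q.-1 -> j = j0)) ->
  \sum_(x : F) x ^+ a * p.[x] = - p`_j0.
Proof.
move=> j0_lt k_j0 k_small; rewrite sum_expr_horner.
exact: (@sum_power_sum_single _ (fun j => p`_j) (fun j => a + j)%N).
Qed.

Lemma sum_expr_horner_none a (p : {poly F}) :
    (forall j, (j < size p)%N -> (a + j < 2 * q.-1)%N /\ (a + j)%N <> q.-1) ->
  \sum_(x : F) x ^+ a * p.[x] = 0.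
Proof.
move=> k_small; rewrite sum_expr_horner.
exact: (@sum_power_sum_none _ (fun j => p`_j) (fun j => a + j)%N).
Qed.

Lemma sum_expr_scale (z : F) (f : F -> F) a : z != 0 ->
  \sum_(x : F) x ^+ a * f x = z ^+ a * \sum_(x : F) x ^+ a * f (z * x).
Proof.
move=> z_neq0; rewrite (reindex_inj (mulfI z_neq0)) mulr_sumr.
by apply: eq_bigr => x _; rewrite exprMn mulrA.
Qed.

Lemma sum_expr_reciprocal (f : F -> F) d a a' :
    (forall x, x != 0 -> x ^+ d * f x^-1 = f x) ->
    (0 < a)%N -> (0 < a')%N -> (q.-1 %| a + a' + d)%N ->
  \sum_(x : F) x ^+ a * f x = \sum_(x : F) x ^+ a' * f x.
Proof.
move=> f_rec a_gt0 a'_gt0 q1_dvd; rewrite (reindex_inj (can_inj (@invrK F))).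
apply: eq_bigr => x _; have [->|x_neq0] := eqVneq x 0.
  by rewrite invr0 !expr0n (gtn_eqF a_gt0) (gtn_eqF a'_gt0) !mul0r.
rewrite -(f_rec x) // mulrA; congr (_ * _); apply: (mulIf (expf_neq0 a x_neq0)).
rewrite exprVn mulVf ?expf_neq0 // -!exprD (expf_modn_pred_card _ x_neq0).
by rewrite addnC addnA (eqP q1_dvd).
Qed.

End PowerSums.

Section CubeRoots.

Variables (R : comNzRingType) (w : R).
Hypothesis w_root : w ^+ 2 + w + 1 = 0.

Definition cube_roots : seq R := [:: 1; w; w ^+ 2].

Lemma eq_mod_cube_root (a b c : R) : a - b = c * (w ^+ 2 + w + 1) -> a = b.
Proof. by rewrite w_root mulr0 => /eqP; rewrite subr_eq0 => /eqP. Qed.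

Lemma expr3_cube_root : w ^+ 3 = 1.
Proof. by apply: (@eq_mod_cube_root _ _ (w - 1)); ring. Qed.

Lemma expr_cube_root_mod3 n : w ^+ n = w ^+ (n %% 3).
Proof. by rewrite {1}(divn_eq n 3) exprD mulnC exprM expr3_cube_root expr1n mul1r. Qed.

Lemma expr3_cube_roots z : z \in cube_roots -> z ^+ 3 = 1.
Proof.
rewrite !inE => /or3P[] /eqP ->; rewrite ?expr1n ?expr3_cube_root //.
by rewrite -exprM mulnC exprM expr3_cube_root expr1n.
Qed.

Lemma cube_roots_neq0 z : z \in cube_roots -> z != 0.
Proof.
by move/expr3_cube_roots; apply: contra_eq_neq => ->; rewrite expr0n eq_sym oner_neq0.
Qed.

Lemma sum_cube_roots_expr n :
  \sum_(z <- cube_roots) z ^+ n = if (3 %| n)%N then 3 else 0.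
Proof.
rewrite !big_cons big_nil addr0 expr1n -exprM mulnC exprM expr_cube_root_mod3 /dvdn.
have : (n %% 3 < 3)%N by rewrite ltn_mod.
case: (n %% 3)%N => [|[|[|//]]] _ /=; rewrite ?expr0 ?expr1n ?expr1.
- by ring.
- by rewrite -w_root; ring.
- have -> : (w ^+ 2) ^+ 2 = w * w ^+ 3 by rewrite -exprM -exprS.
  by rewrite expr3_cube_root mulr1 -w_root; ring.
Qed.

Lemma prod_cube_roots_sub x : \prod_(z <- cube_roots) (x - z) = x ^+ 3 - 1.
Proof.
rewrite !big_cons big_nil mulr1.
by apply: (@eq_mod_cube_root _ _ (1 - w + x * w - x ^+ 2)); ring.
Qed.

Lemma cube_root_pair z x : (x - z * w) * (x - z * w ^+ 2) = x ^+ 2 + z * x + z ^+ 2.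
Proof. by apply: (@eq_mod_cube_root _ _ (z ^+ 2 * (w - 1) - z * x)); ring. Qed.

Lemma expr4_subr_prod x : x ^+ 4 - x = \prod_(b <- 0 :: cube_roots) (x - b).
Proof. by rewrite big_cons subr0 prod_cube_roots_sub mulrBr mulr1 -exprS. Qed.

End CubeRoots.

Section Trinomial.

Variable R : comNzRingType.

Definition trinomial : {poly R} := 'X^2 + 'X + 1.

Lemma size_trinomial : size trinomial = 3%N.
Proof. by rewrite /trinomial size_polyDl ?size_polyDl ?size_polyXn ?size_polyX ?size_poly1. Qed.

Lemma coef_trinomial_exp k :
  [/\ (trinomial ^+ k)`_0 = 1, (trinomial ^+ k)`_1 = k%:R,
      (trinomial ^+ k)`_2 = ('C(k, 2) + k)%:R
    & (trinomial ^+ k)`_3 = ('C(k, 3) + 2 * 'C(k, 2))%:R].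
Proof.
elim: k => [|k [c0 c1 c2 c3]]; first by rewrite expr0 !coef1.
have coefS j : (trinomial ^+ k.+1)`_j = (trinomial ^+ k)`_j
    + (if j == 0%N then 0 else (trinomial ^+ k)`_j.-1)
    + (if (j < 2)%N then 0 else (trinomial ^+ k)`_(j - 2)).
  by rewrite exprSr /trinomial !mulrDr mulr1 !coefD coefMX coefMXn; ring.
rewrite !coefS c0 c1 c2 c3 /=; split.
- by ring.
- by rewrite addr0 natr1.
- by rewrite -natrD natr1 binS bin1; congr _%:R; lia.
by rewrite -!natrD; congr _%:R; rewrite !binS bin1; lia.
Qed.

End Trinomial.

Lemma size_trinomial_exp (R : idomainType) k : size (trinomial R ^+ k) = (2 * k).+1.
Proof.
have := size_exp (trinomial R) k; rewrite size_trinomial mulnC => <-.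
by rewrite prednK // lt0n size_poly_eq0 expf_neq0 // -size_poly_eq0 size_trinomial.
Qed.

Section ShiftedMoments.

Variables (F : finFieldType) (e : nat).
Hypothesis card_F : #|F| = (3 * e).+1.

Lemma pred_card_F : #|F|.-1 = (3 * e)%N. Proof. by rewrite card_F. Qed.

Lemma natr_3e : 3 * e%:R = -1 :> F.
Proof.
apply/eqP; rewrite -addr_eq0 -natrM natr1 -card_F.
by rewrite natr_card_finField.
Qed.

Lemma three_neq0 : 3 != 0 :> F.
Proof.
apply/eqP => three_eq0; move: natr_3e; rewrite three_eq0 mul0r => /eqP.
by rewrite eq_sym oppr_eq0 oner_eq0.
Qed.

Lemma natr_e_neq0 : e%:R != 0 :> F.
Proof.
apply/eqP => e_eq0; move: natr_3e; rewrite e_eq0 mulr0 => /eqP.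
by rewrite eq_sym oppr_eq0 oner_eq0.
Qed.

Lemma power_sum_neq_3e a : (a < 6 * e)%N -> a <> (3 * e)%N -> power_sum F a = 0.
Proof.
move=> a_lt a_neq; rewrite power_sum_small pred_card_F; last lia.
by rewrite (_ : (a == 3 * e)%N = false) ?oppr0 //; apply/eqP.
Qed.

Definition cube_moment (a : nat) : F := \sum_(x : F) x ^+ a * (x ^+ 3 - 1) ^+ e.
Definition trinomial_moment (a : nat) : F := \sum_(x : F) x ^+ a * (x ^+ 2 + x + 1) ^+ e.
Definition linear_moment (a : nat) : F := \sum_(x : F) x ^+ a * (x - 1) ^+ e.

Lemma cube_moment_ndvd3 a : ~~ (3 %| a)%N -> (a < 3 * e)%N -> cube_moment a = 0.
Proof. by move=> a_ndvd a_lt; apply: sum_expr_binomial_none; rewrite pred_card_F; lia. Qed.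

Lemma linear_moment_small a : (a < 2 * e)%N -> linear_moment a = 0.
Proof. by move=> a_lt; apply: (@sum_expr_binomial_none _ _ 1); rewrite pred_card_F; lia. Qed.

Lemma trinomial_momentE a :
  trinomial_moment a = \sum_(x : F) x ^+ a * (trinomial F ^+ e).[x].
Proof. by apply: eq_bigr => x _; rewrite horner_exp /trinomial !hornerE. Qed.

Lemma trinomial_moment_small a : (a < e)%N -> trinomial_moment a = 0.
Proof.
move=> a_lt; rewrite trinomial_momentE sum_expr_horner_none // size_trinomial_exp pred_card_F.
by lia.
Qed.

Lemma trinomial_moment_sym a a' :
    (0 < a)%N -> (0 < a')%N -> (3 * e %| a + a' + 2 * e)%N ->
  trinomial_moment a = trinomial_moment a'.
Proof.
move=> a_gt0 a'_gt0 dvd_aa'; apply: (@sum_expr_reciprocal _ _ (2 * e)); rewrite ?pred_card_F //.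
move=> x x_neq0; rewrite exprM -exprMn; congr (_ ^+ _).
by field.
Qed.

Lemma sum_expr_trinomial_scale (z : F) a : z != 0 ->
  \sum_(x : F) x ^+ a * (x ^+ 2 + z * x + z ^+ 2) ^+ e = z ^+ (a + 2 * e) * trinomial_moment a.
Proof.
move=> z_neq0; rewrite (sum_expr_scale _ _ z_neq0) exprD -mulrA; congr (_ * _).
rewrite mulr_sumr; apply: eq_bigr => x _.
have -> : (z * x) ^+ 2 + z * (z * x) + z ^+ 2 = z ^+ 2 * (x ^+ 2 + x + 1) by ring.
by rewrite exprMn -exprM mulrCA.
Qed.

Lemma sum_expr_linear_scale (z : F) a : z != 0 ->
  \sum_(x : F) x ^+ a * (x - z) ^+ e = z ^+ (a + e) * linear_moment a.
Proof.
move=> z_neq0; rewrite (sum_expr_scale _ _ z_neq0) exprD -mulrA; congr (_ * _).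
rewrite mulr_sumr; apply: eq_bigr => x _.
have -> : z * x - z = z * (x - 1) by ring.
by rewrite exprMn mulrCA.
Qed.

Variable w : F.
Hypothesis w_root : w ^+ 2 + w + 1 = 0.

Definition shift_prod (x : F) : F := \prod_(z <- cube_roots w) ((x - z) ^+ e - 1).

Definition shift_moment (a : nat) : F := \sum_(x : F) x ^+ a * shift_prod x.

Lemma shift_prod_expand x :
  shift_prod x = (x ^+ 3 - 1) ^+ e - \sum_(z <- cube_roots w) (x ^+ 2 + z * x + z ^+ 2) ^+ e
                 + \sum_(z <- cube_roots w) (x - z) ^+ e - 1.
Proof.
have w3 := expr3_cube_root w_root.
have w4 : w ^+ 2 * w ^+ 2 = w by rewrite -exprD (expr_cube_root_mod3 w_root) expr1.
rewrite /shift_prod -(prod_cube_roots_sub w_root) !big_cons !big_nil !mulr1 !addr0.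
rewrite -!(cube_root_pair w_root) !mul1r -expr2 -exprS -exprSr w3 w4 !exprMn.
move: ((x - 1) ^+ e) ((x - w) ^+ e) ((x - w ^+ 2) ^+ e) => u v t; ring.
Qed.

Lemma shift_momentE a :
  shift_moment a = cube_moment a
    - (\sum_(z <- cube_roots w) z ^+ (a + 2 * e)) * trinomial_moment a
    + (\sum_(z <- cube_roots w) z ^+ (a + e)) * linear_moment a - power_sum F a.
Proof.
have trinomial_part : \sum_(x : F) \sum_(z <- cube_roots w) x ^+ a * (x ^+ 2 + z * x + z ^+ 2) ^+ e
    = (\sum_(z <- cube_roots w) z ^+ (a + 2 * e)) * trinomial_moment a.
  rewrite exchange_big mulr_suml /=; apply: eq_big_seq => z /(cube_roots_neq0 w_root).
  exact: sum_expr_trinomial_scale.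
have linear_part : \sum_(x : F) \sum_(z <- cube_roots w) x ^+ a * (x - z) ^+ e
    = (\sum_(z <- cube_roots w) z ^+ (a + e)) * linear_moment a.
  rewrite exchange_big mulr_suml /=; apply: eq_big_seq => z /(cube_roots_neq0 w_root).
  exact: sum_expr_linear_scale.
rewrite /shift_moment /cube_moment /power_sum -trinomial_part -linear_part.
rewrite -sumrB -big_split -sumrB /=.
by apply: eq_bigr => x _; rewrite shift_prod_expand mulrBr mulrDr mulrBr !mulr_sumr mulr1.
Qed.

Lemma shift_moment_cube a :
    ~~ (3 %| a + 2 * e)%N -> ~~ (3 %| a + e)%N || (a < 2 * e)%N ->
  shift_moment a = cube_moment a - power_sum F a.
Proof.
move=> ndvd_a2e /orP a_lin; rewrite shift_momentE !(sum_cube_roots_expr w_root) (negbTE ndvd_a2e).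
case: a_lin => [ndvd_ae|a_lt]; first by rewrite (negbTE ndvd_ae) !mul0r subr0 addr0.
by rewrite linear_moment_small // mul0r mulr0 subr0 addr0.
Qed.

Lemma shift_moment_dvd3 a :
    (3 %| e)%N -> (3 %| a)%N ->
  shift_moment a = cube_moment a - 3 * trinomial_moment a + 3 * linear_moment a - power_sum F a.
Proof.
move=> dvd_e dvd_a; have dvd_a2e : (3 %| a + 2 * e)%N by rewrite dvdn_add ?dvdn_mull.
have dvd_ae : (3 %| a + e)%N by rewrite dvdn_add.
by rewrite shift_momentE !(sum_cube_roots_expr w_root) dvd_a2e dvd_ae.
Qed.

Lemma sum_expr_subr1_shift_prod a b : (a + e)%N = b ->
  \sum_(x : F) x ^+ a * ((x ^+ e - 1) * shift_prod x) = shift_moment b - shift_moment a.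
Proof.
move=> <-; rewrite /shift_moment -sumrB; apply: eq_bigr => x _.
by rewrite mulrA mulrBr mulr1 -exprD mulrBl.
Qed.

Definition sumset_poly (x : F) : F := (x ^+ 4 - x) * ((x ^+ e - 1) * shift_prod x).

Lemma sumset_poly_root (x alpha beta : F) :
  alpha ^+ e.+1 = alpha -> beta ^+ 4 = beta -> x = alpha + beta -> sumset_poly x = 0.
Proof.
move=> alpha_pot beta_pot x_eq.
have -> : sumset_poly x = \prod_(b <- 0 :: cube_roots w) ((x - b) * ((x - b) ^+ e - 1)).
  by rewrite big_split /= -(expr4_subr_prod w_root) big_cons subr0.
have beta_root : beta \in 0 :: cube_roots w.
  move/eqP: beta_pot; rewrite -subr_eq0 (expr4_subr_prod w_root) prodf_seq_eq0.
  by case/hasP=> b b_in /andP[_]; rewrite subr_eq0 => /eqP ->.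
apply/eqP; rewrite prodf_seq_eq0; apply/hasP; exists beta => //=.
by rewrite x_eq addrK mulrBr mulr1 -exprS alpha_pot subrr.
Qed.

Hypothesis e_even : ~~ odd e.

Lemma reciprocal_subr1_exp k (x : F) :
  x != 0 -> x ^+ (k * e) * (x^-1 ^+ k - 1) ^+ e = (x ^+ k - 1) ^+ e.
Proof.
move=> x_neq0; rewrite exprM -exprMn mulrBr mulr1 exprVn mulfV ?expf_neq0 //.
by rewrite -opprB exprNn -signr_odd (negbTE e_even) mul1r.
Qed.

Lemma cube_moment_sym a a' :
  (0 < a)%N -> (0 < a')%N -> (3 * e %| a + a')%N -> cube_moment a = cube_moment a'.
Proof.
move=> a_gt0 a'_gt0 dvd_aa'; apply: (@sum_expr_reciprocal _ _ (3 * e)) => //.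
  exact: reciprocal_subr1_exp.
by rewrite pred_card_F dvdn_add.
Qed.

Lemma linear_moment_sym a a' :
  (0 < a)%N -> (0 < a')%N -> (3 * e %| a + a' + e)%N -> linear_moment a = linear_moment a'.
Proof.
move=> a_gt0 a'_gt0 dvd_aa'; apply: (@sum_expr_reciprocal _ _ e) => //.
  by move=> x; have := @reciprocal_subr1_exp 1 x; rewrite mul1n.
by rewrite pred_card_F.
Qed.

Lemma two_neq0 : 2 != 0 :> F.
Proof.
apply/eqP => two_eq0; have [m e_eq] : exists m, e = (m * 2)%N by exists e./2; lia.
move: natr_3e; rewrite e_eq natrM two_eq0 !mulr0 => /eqP.
by rewrite eq_sym oppr_eq0 oner_eq0.
Qed.

Lemma natr_eS_neq0 : e.+1%:R != 0 :> F.
Proof.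
apply: contraNneq two_neq0 => eS_eq0.
have : 3 * e.+1%:R = 2 :> F by rewrite -(natr1 e) mulrDr natr_3e; ring.
by rewrite eS_eq0 mulr0 => <-.
Qed.

Hypothesis e_ge6 : (6 <= e)%N.

Lemma cube_moment_3e_sub3 : cube_moment (3 * e - 3) = e%:R.
Proof.
rewrite /cube_moment (@sum_expr_binomial_single _ _ _ _ _ (e - 1)) ?pred_card_F; try lia.
have odd_e1 : odd (e - 1) by lia.
by rewrite -signr_odd odd_e1 /= mulNrn opprK bin_sub ?bin1 //; lia.
Qed.

Lemma cube_moment_3e_sub6 : cube_moment (3 * e - 6) = - 'C(e, 2)%:R.
Proof.
rewrite /cube_moment (@sum_expr_binomial_single _ _ _ _ _ (e - 2)) ?pred_card_F; try lia.
have even_e2 : ~~ odd (e - 2) by lia.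
by rewrite -signr_odd (negbTE even_e2) /= bin_sub //; lia.
Qed.

Lemma linear_moment_3e_sub3 : linear_moment (3 * e - 3) = 'C(e, 3)%:R.
Proof.
rewrite /linear_moment (@sum_expr_binomial_single _ _ 1 _ _ (e - 3)) ?pred_card_F; try lia.
have odd_e3 : odd (e - 3) by lia.
by rewrite -signr_odd odd_e3 /= mulNrn opprK bin_sub //; lia.
Qed.

Lemma trinomial_moment_3e_sub3 :
  trinomial_moment (3 * e - 3) = - ('C(e, 3) + 2 * 'C(e, 2))%:R.
Proof.
have [_ _ _ <-] := coef_trinomial_exp F e.
rewrite trinomial_momentE (@sum_expr_horner_single _ _ _ 3) //.
all: by rewrite ?size_trinomial_exp ?pred_card_F; lia.
Qed.

Lemma natr_eP_neq0 : e.-1%:R != 0 :> F.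
Proof.
apply: contraNneq two_neq0 => eP_eq0.
have : 3 * e.-1%:R = - (2 * 2) :> F.
  have := natr_3e; rewrite -(ltn_predK e_ge6) -(natr1 e.-1) mulrDr mulr1 => h.
  have -> : 3 * e.-1%:R = 3 * e.-1%:R + 3 - 3 :> F by ring.
  by rewrite h; ring.
by rewrite eP_eq0 mulr0 => /esym/eqP; rewrite oppr_eq0 mulf_eq0 orbb.
Qed.

Lemma natr_binS2_neq0 : 'C(e.+1, 2)%:R != 0 :> F.
Proof.
have := bin_ffact e.+1 2; rewrite !ffactnS ffactn0 muln1 /= => C_fact.
apply: contraTneq (mulf_neq0 natr_eS_neq0 natr_e_neq0) => C_eq0.
by rewrite -natrM -C_fact natrM C_eq0 mul0r eqxx.
Qed.

Lemma natr_binS3_neq0 : 'C(e.+1, 3)%:R != 0 :> F.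
Proof.
have := bin_ffact e.+1 3; rewrite !ffactnS ffactn0 muln1 /= => C_fact.
apply: contraTneq (mulf_neq0 natr_eS_neq0 (mulf_neq0 natr_e_neq0 natr_eP_neq0)) => C_eq0.
by rewrite -!natrM -C_fact natrM C_eq0 mul0r eqxx.
Qed.

Lemma shift_moment_combination_ndvd3 :
    ~~ (3 %| e)%N ->
  shift_moment (3 * e - 3) - shift_moment (2 * e - 3)
    - (shift_moment (3 * e - 6) - shift_moment (2 * e - 6)) = 'C(e.+1, 2)%:R.
Proof.
move=> e_ndvd3; rewrite !shift_moment_cube; try lia.
rewrite cube_moment_3e_sub3 cube_moment_3e_sub6 !cube_moment_ndvd3 ?power_sum_neq_3e; try lia.
by rewrite binS bin1 natrD; ring.
Qed.

Lemma sumset_poly_nonvanishing_ndvd3 : ~~ (3 %| e)%N -> ~ (forall x, sumset_poly x = 0).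
Proof.
move=> e_ndvd3 vanish; case/negP: natr_binS2_neq0; apply/eqP.
rewrite -shift_moment_combination_ndvd3 //.
rewrite -(@sum_expr_subr1_shift_prod (2 * e - 3)) -?(@sum_expr_subr1_shift_prod (2 * e - 6)); try lia.
rewrite -sumrB; apply: big1 => x _.
have -> : (2 * e - 3 = 2 * e - 7 + 4)%N by lia.
have -> : (2 * e - 6 = (2 * e - 7).+1)%N by lia.
set k := (2 * e - 7)%N.
rewrite (exprD x k 4) (exprSr x k) -(mulrA _ (x ^+ 4)) -(mulrA _ x) -mulrBr -mulrBl.
by rewrite -/(sumset_poly x) vanish mulr0.
Qed.

(* The cube moments cancel in pairs under x |-> 1/x, and so do all trinomial and
   linear moments except those at 3e - 3. *)
Lemma shift_moment_combination_dvd3 :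
    (3 %| e)%N ->
  2 * (shift_moment (3 * e - 3) - shift_moment (2 * e - 3))
    + (shift_moment (2 * e - 3) - shift_moment (e - 3))
    + (shift_moment (e + 3) - shift_moment 3)
    - (shift_moment (3 * e + 3) - shift_moment (2 * e + 3)) = 2 * 3 * 3 * 'C(e.+1, 3)%:R.
Proof.
move=> e_dvd3; rewrite !shift_moment_dvd3; try lia.
rewrite (@cube_moment_sym 3 (3 * e - 3)%N) ?(@cube_moment_sym (3 * e + 3)%N (3 * e - 3)%N)
  ?(@cube_moment_sym (e + 3)%N (2 * e - 3)%N) ?(@cube_moment_sym (2 * e + 3)%N (e - 3)%N)
  ?(@trinomial_moment_sym (e + 3)%N (3 * e - 3)%N)
  ?(@trinomial_moment_sym (2 * e + 3)%N (2 * e - 3)%N)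
  ?(@trinomial_moment_sym (3 * e + 3)%N (e - 3)%N)
  ?(@linear_moment_sym (3 * e + 3)%N (2 * e - 3)%N)
  ?(@linear_moment_sym (2 * e + 3)%N (3 * e - 3)%N)
  ?(@trinomial_moment_small (e - 3)) ?(@trinomial_moment_small 3)
  ?(@linear_moment_small (2 * e - 3)) ?(@linear_moment_small (e - 3))
  ?(@linear_moment_small (e + 3)) ?(@linear_moment_small 3)
  ?trinomial_moment_3e_sub3 ?linear_moment_3e_sub3 ?power_sum_neq_3e; try lia; first last.
all: try by apply/dvdnP; exists 1%N; lia.
all: try by apply/dvdnP; exists 2%N; lia.
by rewrite binS natrD; ring.
Qed.

Lemma shift_moment_periodic :
  (3 %| e)%N -> (forall x, sumset_poly x = 0) -> forall a, shift_moment (a + e) = shift_moment a.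
Proof.
move=> e_dvd3 vanish a; apply/eqP; rewrite -subr_eq0 -(sum_expr_subr1_shift_prod (erefl _)).
apply/eqP/big1 => x _; apply/eqP; rewrite mulf_eq0; apply/orP; right.
have /eqP := vanish x; rewrite mulf_eq0 => /orP[|//].
rewrite (expr4_subr_prod w_root) prodf_seq_eq0 => /hasP[b b_root /andP[_]].
rewrite subr_eq0 => /eqP ->; move: b_root; rewrite inE.
case/orP=> [/eqP ->|/(expr3_cube_roots w_root) b3].
  by rewrite /shift_prod big_cons sub0r -signr_odd (negbTE e_even) subrr mul0r mulr0.
have [k e_eq] : exists k, e = (3 * k)%N by exists (e %/ 3)%N; lia.
by rewrite {1}e_eq exprM b3 expr1n subrr mul0r.
Qed.

Lemma sumset_poly_nonvanishing_dvd3 : (3 %| e)%N -> ~ (forall x, sumset_poly x = 0).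
Proof.
move=> e_dvd3 /(shift_moment_periodic e_dvd3) periodic.
have shift a b : (a + e)%N = b -> shift_moment b = shift_moment a by move=> <-.
have := shift_moment_combination_dvd3 e_dvd3.
rewrite (@shift (2 * e - 3)%N (3 * e - 3)%N) ?(@shift (e - 3)%N (2 * e - 3)%N); try lia.
rewrite (@shift 3 (e + 3)%N) ?(@shift (2 * e + 3)%N (3 * e + 3)%N); try lia.
rewrite !subrr mulr0 !addr0 subrr => /eqP; apply/negP.
by rewrite eq_sym !mulf_neq0 ?two_neq0 ?three_neq0 ?natr_binS3_neq0.
Qed.

End ShiftedMoments.

Theorem theorem2p4 (F : finFieldType) :
  odd #|F| -> (#|F| %% 3 = 1)%N -> (261 < #|F|)%N ->
  exists gamma : F, ~ exists alpha beta : F,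
    mpotent ((#|F| + 2) %/ 3)%N alpha /\ mpotent 4 beta /\ gamma = alpha + beta.
Proof.
move=> q_odd q_mod3 q_big; set e := (#|F| %/ 3)%N.
have card_F : #|F| = (3 * e).+1 by rewrite /e; lia.
have e_even : ~~ odd e by move: q_odd; rewrite card_F; lia.
have e_ge6 : (6 <= e)%N by rewrite /e; lia.
have n_eq : ((#|F| + 2) %/ 3)%N = e.+1 by rewrite /e; lia.
have [w w_root] : exists w : F, w ^+ 2 + w + 1 = 0.
  by apply: exists_cube_root; rewrite card_F dvdn_mulr.
apply: NNPP => /not_ex_not_all all_sums.
have vanish x : sumset_poly e w x = 0.
  have [alpha [beta [alpha_pot [beta_pot x_eq]]]] := all_sums x.
  by rewrite /mpotent n_eq in alpha_pot; exact: sumset_poly_root alpha_pot beta_pot x_eq.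
have [e_dvd3|e_ndvd3] := boolP (3 %| e)%N.
  exact: (sumset_poly_nonvanishing_dvd3 card_F w_root e_even e_ge6 e_dvd3).
exact: (sumset_poly_nonvanishing_ndvd3 card_F w_root e_even e_ge6 e_ndvd3).
Qed.
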